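(* Let $q=2^h$. In ${\rm PG}(4,q)$ with homogeneous coordinates $(X_1,\dots,X_5)$ let $\pi$ be the plane $X_4=X_5=0$, $\ell$ the line $X_1=X_4=X_5=0$, $\Sigma$ the solid $X_1=0$, $N=(1,0,0,0,0)$, $\mathcal H$ the hyperbolic quadric of $\Sigma$ with equation $X_2X_5+X_3X_4=0$ (and $X_1=0$), $\mathcal C$ the quadratic cone of ${\rm PG}(4,q)$ with equation $X_2X_5+X_3X_4=0$ (vertex $N$, base $\mathcal H$), and let $\mathcal Q_1,\dots,\mathcal Q_{q-1}$ be the $q-1$ parabolic quadrics $X_2X_5+X_3X_4+\lambda X_1^2=0$, $\lambda\in{\rm GF}(q)\setminus\{0\}$. Let $\alpha\in{\rm GF}(q)$ be such that $X^2+X+\alpha$ is irreducible over ${\rm GF}(q)$ and let $G=\{M_{a,b,c,d}: a\in{\rm GF}(q)\setminus\{0\},\ b,c,d\in{\rm GF}(q),\ c^2+cd+\alpha d^2=1\}$, where $$M_{a,b,c,d}=\begin{pmatrix}1&0&0&0&0\\0&ac&\alpha ad&bc&\alpha bd\\0&ad&a(c+d)&bd&b(c+d)\\0&0&0&a^{-1}c&\alpha a^{-1}d\\0&0&0&a^{-1}d&a^{-1}(c+d)\end{pmatrix},$$ acting on points (column vectors) by left multiplication. Then $G$ has exactly $q+5$ orbits on the points of ${\rm PG}(4,q)$: (a) $\{N\}$; (b) an orbit of size $q+1$ consisting of the points of $\ell$; (c) an orbit of size $q^2-1$ consisting of the points of $\pi\setminus(\ell\cup\{N\})$; (d) an orbit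 of size $q^2+q$ consisting of the points of $\mathcal H\setminus\ell$; (e) an orbit of size $q^3-q$ consisting of the points of $\Sigma\setminus\mathcal H$; (f) an orbit of size $q^3-q$ consisting of the points of $\mathcal C\setminus(\pi\cup\mathcal H)$; (g) $q-1$ orbits of size $q^3-q$, namely the sets $\mathcal Q_i\setminus\mathcal H$, $1\le i\le q-1$. *)

From HB Require Import structures.
From mathcomp Require Import all_boot all_order all_algebra.
Set Implicit Arguments. Unset Strict Implicit. Unset Printing Implicit Defensive.
Import GRing.Theory.
Local Open Scope ring_scope.

Section PG4.
Variable F : finFieldType.

(* Coordinates X_1..X_5 are the entries v 0 0, ..., v 4 0 of a column vector. *)
Definition X (v : 'cV[F]_5) (k : nat) : F := v (inord k) 0.

Definition pt (v : 'cV[F]_5) : {set 'cV[F]_5} := [set k *: v | k in [set k : F | k != 0]].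

Definition PG : {set {set 'cV[F]_5}} := [set pt v | v in [set v : 'cV[F]_5 | v != 0]].

Definition pset (P : 'cV[F]_5 -> bool) : {set {set 'cV[F]_5}} :=
  [set p in PG | [forall v in p, P v]].

Definition Npt : {set 'cV[F]_5} := pt (\col_(i < 5) (i == 0 :> nat)%:R).
Definition ell := pset (fun v => [&& X v 0 == 0, X v 3 == 0 & X v 4 == 0]).
Definition planePi := pset (fun v => (X v 3 == 0) && (X v 4 == 0)).
Definition Sigma := pset (fun v => X v 0 == 0).
Definition Hq := pset (fun v => (X v 0 == 0) && (X v 1 * X v 4 + X v 2 * X v 3 == 0)).
Definition Cone := pset (fun v => X v 1 * X v 4 + X v 2 * X v 3 == 0).
Definition Quad (l : F) :=
  pset (fun v => X v 1 * X v 4 + X v 2 * X v 3 + l * X v 0 ^+ 2 == 0).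

Definition Mabcd (alpha a b c d : F) : 'M[F]_5 :=
  let rows := [:: [:: 1; 0; 0; 0; 0];
                  [:: 0; a * c; alpha * a * d; b * c; alpha * b * d];
                  [:: 0; a * d; a * (c + d); b * d; b * (c + d)];
                  [:: 0; 0; 0; a^-1 * c; alpha * a^-1 * d];
                  [:: 0; 0; 0; a^-1 * d; a^-1 * (c + d)]] in
  \matrix_(i < 5, j < 5) nth 0 (nth [::] rows i) j.

Definition Ggrp (alpha : F) : {set 'M[F]_5} :=
  [set M | [exists a : F, exists b : F, exists c : F, exists d : F,
     [&& a != 0, c ^+ 2 + c * d + alpha * d ^+ 2 == 1 & M == Mabcd alpha a b c d]]].

Definition act (M : 'M[F]_5) (p : {set 'cV[F]_5}) : {set 'cV[F]_5} :=
  [set M *m v | v in p].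

Definition orbitG (alpha : F) (p : {set 'cV[F]_5}) : {set {set 'cV[F]_5}} :=
  [set act M p | M in Ggrp alpha].

Definition orbitsG (alpha : F) : {set {set {set 'cV[F]_5}}} :=
  [set orbitG alpha p | p in PG].

End PG4.

From HB Require Import structures.
From mathcomp Require Import all_boot all_order all_algebra all_field.
From mathcomp Require Import ring zify.
Set Implicit Arguments. Unset Strict Implicit. Unset Printing Implicit Defensive.
Import GRing.Theory.
Local Open Scope ring_scope.

(* Write a vector as (x, u, w) with x = X_1, u = (X_2, X_3), w = (X_4, X_5), and read
   a pair (c, d) as c + d*o in the quadratic extension F[o], o^2 = o + alpha, whose
   norm is c^2 + c d + alpha d^2.  Then M_{a,b,c,d} maps (x, u, w) to
   (x, a g u + b g w, a^-1 g w) with g = c + d*o of norm 1.  In characteristic 2,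
   Q(u, w) = X_2 X_5 + X_3 X_4 is the polar form of the norm, so Q(g u, g w) = Q(u, w)
   and Q(w, w) = 0; thus x, Q(u, w), whether w = 0 and (if so) whether u = 0 are
   invariants, and up to scalars they distinguish q + 5 types of points.  Conversely,
   since every element of F is a square, F^* times the norm-1 group is transitive on
   F[o] \ {0}; this moves w, and once Q is matched the term b g w moves u along w.
   So every type is one orbit, of size (number of vectors of that type) / (q - 1). *)

Section QuadraticExtension.
Variables (F : finFieldType) (alpha : F).
Hypothesis pcharF2 : 2 \in [pchar F].
Hypothesis no_root : forall x : F, x ^+ 2 + x + alpha != 0.
Implicit Types (a b k l x : F) (g h u w y z t : F * F).

Let two0 : 2 = 0 :> F := pcharf0 pcharF2.

Definition qnorm y : F := y.1 ^+ 2 + y.1 * y.2 + alpha * y.2 ^+ 2.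
Definition qmul g y : F * F := (g.1 * y.1 + alpha * g.2 * y.2, g.2 * y.1 + (g.1 + g.2) * y.2).
Definition qscale k y : F * F := (k * y.1, k * y.2).
Definition qpolar y z : F := y.1 * z.2 + y.2 * z.1.

Lemma qscale_eq0 k y : (qscale k y == 0) = (k == 0) || (y == 0).
Proof. by case: y => y1 y2; rewrite /qscale xpair_eqE /= !mulf_eq0; case: (k == 0). Qed.

Lemma qscaler0 k : qscale k 0 = 0.
Proof. by rewrite /qscale /= mulr0. Qed.

Lemma qscaleA k l y : qscale k (qscale l y) = qscale (k * l) y.
Proof. by apply: injective_projections => /=; ring. Qed.

Lemma qmulr0 g : qmul g 0 = 0.
Proof. by apply: injective_projections => /=; ring. Qed.

Lemma qmulDr g y z : qmul g (y + z) = qmul g y + qmul g z.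
Proof. by apply: injective_projections => /=; ring. Qed.

Lemma qmulBl g h y : qmul (g - h) y = qmul g y - qmul h y.
Proof. by apply: injective_projections => /=; ring. Qed.

Lemma qmulZl k g y : qmul (qscale k g) y = qscale k (qmul g y).
Proof. by apply: injective_projections => /=; ring. Qed.

Lemma qnormZ k y : qnorm (qscale k y) = k ^+ 2 * qnorm y.
Proof. by rewrite /qnorm /=; ring. Qed.

Lemma qnorm10 : qnorm (1, 0) = 1.
Proof. by rewrite /qnorm /=; ring. Qed.

Lemma qpolarr0 y : qpolar y 0 = 0.
Proof. by rewrite /qpolar /= !mulr0 addr0. Qed.

Lemma qpolarDl y y' z : qpolar (y + y') z = qpolar y z + qpolar y' z.
Proof. by rewrite /qpolar /=; ring. Qed.

Lemma qpolarBl y y' z : qpolar (y - y') z = qpolar y z - qpolar y' z.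
Proof. by rewrite /qpolar /=; ring. Qed.

Lemma qpolarZl k y z : qpolar (qscale k y) z = k * qpolar y z.
Proof. by rewrite /qpolar /=; ring. Qed.

Lemma qpolarZr k y z : qpolar y (qscale k z) = k * qpolar y z.
Proof. by rewrite /qpolar /=; ring. Qed.

Lemma sqrf_surj x : exists s, s ^+ 2 = x.
Proof.
have sqr_inj : injective (fun s : F => s ^+ 2).
  move=> s s' /= ss'; apply/eqP; rewrite -subr_eq0 (oppr_pchar2 pcharF2) -sqrf_eq0.
  have -> : (s + s') ^+ 2 = s ^+ 2 + s' ^+ 2 by ring: two0.
  by rewrite ss' addrr_pchar2.
by have [sqrt _ sqrtK] := injF_bij sqr_inj; exists (sqrt x); apply: sqrtK.
Qed.

(* Negating [alpha * g.2 * y.2] (harmless in characteristic 2) turns [qmul] into the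
   product of F[o] with o^2 = o - alpha, whose norm is [qnorm] in any characteristic. *)
Lemma qnormM g y : qnorm (qmul g y) = qnorm g * qnorm y.
Proof.
rewrite /qmul -[alpha * g.2 * y.2](oppr_pchar2 pcharF2).
by rewrite /qnorm /=; ring.
Qed.

Lemma qpolar_qnorm y z : qpolar y z = qnorm (y + z) - qnorm y - qnorm z.
Proof. by rewrite /qpolar /qnorm /=; ring: two0. Qed.

Lemma qpolarM g y z : qpolar (qmul g y) (qmul g z) = qnorm g * qpolar y z.
Proof. by rewrite !qpolar_qnorm -qmulDr !qnormM; ring. Qed.

Lemma qpolarxx y : qpolar y y = 0.
Proof. by rewrite /qpolar; ring: two0. Qed.

Lemma qpolar_eq0_parallel y z : z != 0 -> qpolar y z = 0 -> exists k, y = qscale k z.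
Proof.
case: y z => y1 y2 [z1 z2] z_neq0; rewrite /qpolar /qscale /= => yz0.
have [z10 | z1_neq0] := eqVneq z1 0.
  have z2_neq0 : z2 != 0 by move: z_neq0; rewrite z10 xpair_eqE eqxx.
  move: yz0; rewrite z10 mulr0 addr0 => /eqP.
  rewrite mulf_eq0 (negPf z2_neq0) orbF => /eqP ->.
  by exists (y2 / z2); rewrite mulr0 divfK.
exists (y1 / z1); rewrite divfK //; congr pair; apply: (mulIf z1_neq0).
by rewrite mulrAC divfK //; apply/eqP; rewrite -subr_eq0 (oppr_pchar2 pcharF2) addrC yz0.
Qed.

Lemma qnorm_eq0 y : (qnorm y == 0) = (y == 0).
Proof.
case: y => y1 y2; apply/idP/idP => [|/eqP[-> ->]]; last by rewrite /qnorm /=; apply/eqP; ring.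
have [-> | y2_neq0] := eqVneq y2 0.
  by rewrite /qnorm /= expr0n /= !mulr0 !addr0 sqrf_eq0 => /eqP ->.
have -> : qnorm (y1, y2) = y2 ^+ 2 * ((y1 / y2) ^+ 2 + y1 / y2 + alpha).
  by rewrite /qnorm /=; field.
by rewrite mulf_eq0 sqrf_eq0 (negPf y2_neq0) (negPf (no_root _)).
Qed.

Lemma qmul_eq0 g y : (qmul g y == 0) = (g == 0) || (y == 0).
Proof. by rewrite -qnorm_eq0 qnormM mulf_eq0 !qnorm_eq0. Qed.

Lemma qmul_surj y z : y != 0 -> exists g, qmul g y = z.
Proof.
move=> y_neq0; have mul_inj : injective (qmul^~ y).
  move=> g h /= /eqP; rewrite -subr_eq0 -qmulBl qmul_eq0 (negPf y_neq0) orbF subr_eq0.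
  by move/eqP.
by have [div _ divK] := injF_bij mul_inj; exists (div z); apply: divK.
Qed.

Lemma qnorm1_transitive y z : y != 0 -> z != 0 ->
  exists a g, [/\ a != 0, qnorm g = 1 & qmul (qscale a g) y = z].
Proof.
move=> y_neq0 z_neq0; have [g gyz] := qmul_surj z y_neq0.
have g_neq0 : g != 0 by move: z_neq0; rewrite -gyz qmul_eq0 negb_or => /andP[].
have [s s2] := sqrf_surj (qnorm g).
have s_neq0 : s != 0 by rewrite -sqrf_eq0 s2 qnorm_eq0.
exists s, (qscale s^-1 g); split=> //.
  by rewrite qnormZ -s2 exprVn mulVf // sqrf_eq0.
by rewrite qscaleA divff // /qscale !mul1r; case: g gyz {g_neq0 s2}.
Qed.

Definition actU a b g u w : F * F := qmul (qscale a g) u + qmul (qscale b g) w.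
Definition actW a g w : F * F := qmul (qscale a^-1 g) w.

Lemma actW_eq0 a g w : a != 0 -> qnorm g = 1 -> (actW a g w == 0) = (w == 0).
Proof.
move=> a_neq0 g1; rewrite /actW qmul_eq0 qscale_eq0 invr_eq0 (negPf a_neq0).
by rewrite -qnorm_eq0 g1 oner_eq0.
Qed.

Lemma actU_eq0 a b g u : a != 0 -> qnorm g = 1 -> (actU a b g u 0 == 0) = (u == 0).
Proof.
move=> a_neq0 g1; rewrite /actU qmulr0 addr0 qmul_eq0 qscale_eq0 (negPf a_neq0).
by rewrite -qnorm_eq0 g1 oner_eq0.
Qed.

Lemma qpolar_act a b g u w : a != 0 ->
  qpolar (actU a b g u w) (actW a g w) = qnorm g * qpolar u w.
Proof.
move=> a_neq0; rewrite /actU /actW qpolarDl !qmulZl !qpolarZl !qpolarZr.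
by rewrite !qpolarM qpolarxx !mulr0 addr0 mulVKf.
Qed.

Lemma act_transitive_neq0 u w z t : w != 0 -> t != 0 -> qpolar u w = qpolar z t ->
  exists a b g, [/\ a != 0, qnorm g = 1, actU a b g u w = z & actW a g w = t].
Proof.
move=> w_neq0 t_neq0 uwzt.
have [a [g [a_neq0 g1 gwt]]] := qnorm1_transitive w_neq0 t_neq0.
pose s := qmul (qscale a^-1 g) u.
have : qpolar (z - s) t = 0.
  rewrite qpolarBl -uwzt -gwt /s !qmulZl qpolarZl qpolarZr qpolarM g1 mul1r.
  by rewrite mulKf ?invr_eq0 // subrr.
case/(qpolar_eq0_parallel t_neq0) => k zst.
exists a^-1, (k * a), g; split; rewrite ?invr_eq0 //.
  by rewrite /actU -/s qmulZl -qscaleA -qmulZl gwt -zst addrC subrK.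
by rewrite /actW invrK.
Qed.

Lemma act_transitive u w u' w' k : k != 0 -> qpolar u w = k ^+ 2 * qpolar u' w' ->
    (w == 0) = (w' == 0) -> (w = 0 -> (u == 0) = (u' == 0)) ->
  exists a b g, [/\ a != 0, qnorm g = 1,
    actU a b g u w = qscale k u' & actW a g w = qscale k w'].
Proof.
move=> k_neq0 uwk ww uu; have [w0 | w_neq0] := eqVneq w 0; last first.
  apply: act_transitive_neq0 => //; first by rewrite qscale_eq0 negb_or k_neq0 -ww.
  by rewrite qpolarZl qpolarZr mulrA -expr2.
have w'0 : w' = 0 by apply/eqP; rewrite -ww w0.
have [u0 | u_neq0] := eqVneq u 0.
  have u'0 : u' = 0 by apply/eqP; rewrite -uu // u0.
  exists 1, 0, (1, 0); rewrite /actU /actW w0 w'0 u0 u'0 !qmulr0 qscaler0 addr0.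
  by rewrite oner_eq0 qnorm10.
have [|a [g [a_neq0 g1 gu]]] := qnorm1_transitive u_neq0 (z := qscale k u').
  by rewrite qscale_eq0 negb_or k_neq0 -(uu w0).
by exists a, 0, g; rewrite /actU /actW w0 w'0 gu !qmulr0 qscaler0 addr0.
Qed.

End QuadraticExtension.

Section Coordinates.
Variable F : finFieldType.
Implicit Types (x k : F) (u w : F * F) (v : 'cV[F]_5).

Definition vec x u w : 'cV[F]_5 := \col_(i < 5) nth 0 [:: x; u.1; u.2; w.1; w.2] i.
Definition xu v : F * F := (X v 1, X v 2).
Definition xw v : F * F := (X v 3, X v 4).

Lemma X0_vec x u w : X (vec x u w) 0 = x.
Proof. by rewrite /X mxE inordK. Qed.

Lemma xu_vec x u w : xu (vec x u w) = u.
Proof. by rewrite /xu /X !mxE !inordK //; case: u. Qed.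

Lemma xw_vec x u w : xw (vec x u w) = w.
Proof. by rewrite /xw /X !mxE !inordK //; case: w. Qed.

Lemma vecK v : vec (X v 0) (xu v) (xw v) = v.
Proof.
apply/matrixP=> i j; rewrite !mxE (ord1 j) /X.
by case: i => [[|[|[|[|[|i]]]]] lti] //=; congr (v _ _); apply: val_inj; rewrite /= inordK.
Qed.

Lemma vec_eq0 x u w : (vec x u w == 0) = [&& x == 0, u == 0 & w == 0].
Proof.
apply/eqP/and3P => [v0 | [/eqP-> /eqP-> /eqP->]].
  move: (X0_vec x u w) (xu_vec x u w) (xw_vec x u w).
  by rewrite v0 /xu /xw /X !mxE => <- <- <-; rewrite !eqxx.
by rewrite -[RHS]vecK /xu /xw /X !mxE.
Qed.

Lemma vec_neq0 v : (v != 0) = [|| X v 0 != 0, xu v != 0 | xw v != 0].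
Proof. by rewrite -{1}(vecK v) vec_eq0 !negb_and. Qed.

Lemma XZ k v i : X (k *: v) i = k * X v i.
Proof. by rewrite /X mxE. Qed.

Lemma xuZ k v : xu (k *: v) = qscale k (xu v).
Proof. by rewrite /xu !XZ. Qed.

Lemma xwZ k v : xw (k *: v) = qscale k (xw v).
Proof. by rewrite /xw !XZ. Qed.

Lemma scale_vec k x u w : k *: vec x u w = vec (k * x) (qscale k u) (qscale k w).
Proof. by apply/matrixP=> i j; rewrite !mxE; case: i => [[|[|[|[|[|i]]]]] lti]. Qed.

Lemma Mabcd_vec alpha a b c d x u w :
  Mabcd alpha a b c d *m vec x u w = vec x (actU alpha a b (c, d) u w) (actW alpha a (c, d) w).
Proof.
apply/matrixP=> i j; rewrite !mxE !big_ord_recl big_ord0 !mxE /=.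
by case: i => [[|[|[|[|[|i]]]]] lti] //=; ring.
Qed.

Lemma Mabcd_vecE alpha a b c d v : Mabcd alpha a b c d *m v =
  vec (X v 0) (actU alpha a b (c, d) (xu v) (xw v)) (actW alpha a (c, d) (xw v)).
Proof. by rewrite -{1}(vecK v) Mabcd_vec. Qed.

End Coordinates.

Section PointTypes.
Variable F : finFieldType.
Implicit Types (k l : F) (v : 'cV[F]_5).

(* The types of nonzero vectors, one per orbit in the order (a)-(g) of the statement;
   [PQuad 0] is the cone orbit (f), [PQuad l] for l != 0 is Q_l minus H. *)
Inductive ptype := PtN | Pell | Pplane | PHq | PSigma | PQuad of F.

Definition ptype_code (L : ptype) : 'I_5 + F :=
  match L with
  | PtN => inl (@Ordinal 5 0 isT) | Pell => inl (@Ordinal 5 1 isT)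
  | Pplane => inl (@Ordinal 5 2 isT) | PHq => inl (@Ordinal 5 3 isT)
  | PSigma => inl (@Ordinal 5 4 isT) | PQuad l => inr l
  end.

Definition ptype_decode (c : 'I_5 + F) : ptype :=
  match c with inl i => nth PSigma [:: PtN; Pell; Pplane; PHq] i | inr l => PQuad l end.

Lemma ptype_codeK : cancel ptype_code ptype_decode.
Proof. by case. Qed.

Lemma ptype_decodeK : cancel ptype_decode ptype_code.
Proof. by case=> // -[[|[|[|[|[|i]]]]] lti] //=; congr inl; apply: val_inj. Qed.

HB.instance Definition _ := Finite.copy ptype (can_type ptype_codeK).

Lemma card_ptype : #|{: ptype}| = (#|F| + 5)%N.
Proof.
by rewrite (bij_eq_card (Bijective ptype_codeK ptype_decodeK)) card_sum card_ord addnC.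
Qed.

Lemma eqPQuad l l' : (PQuad l == PQuad l') = (l == l').
Proof. by apply/eqP/eqP => [[]|->]. Qed.

Definition ptype_of v : ptype :=
  if xw v == 0 then
    if xu v == 0 then PtN else if X v 0 == 0 then Pell else Pplane
  else if X v 0 == 0 then
    if qpolar (xu v) (xw v) == 0 then PHq else PSigma
  else PQuad (- qpolar (xu v) (xw v) / X v 0 ^+ 2).

Definition is_ptype (L : ptype) v : bool :=
  match L with
  | PtN => [&& X v 0 != 0, xw v == 0 & xu v == 0]
  | Pell => [&& X v 0 == 0, xw v == 0 & xu v != 0]
  | Pplane => [&& X v 0 != 0, xw v == 0 & xu v != 0]
  | PHq => [&& X v 0 == 0, xw v != 0 & qpolar (xu v) (xw v) == 0]
  | PSigma => [&& X v 0 == 0, xw v != 0 & qpolar (xu v) (xw v) != 0]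
  | PQuad l => [&& X v 0 != 0, xw v != 0 & qpolar (xu v) (xw v) == - l * X v 0 ^+ 2]
  end.

Lemma ptype_ofP v : v != 0 -> is_ptype (ptype_of v) v.
Proof.
rewrite vec_neq0 /ptype_of => nz; case: eqP => [w0 | /eqP w_neq0].
  case: eqP => [u0 | /eqP u_neq0].
    by move: nz; rewrite /= w0 u0 eqxx !orbF => ->.
  by case: eqP => [x0 | /eqP x_neq0]; rewrite /= w0 u_neq0 eqxx ?x0 ?x_neq0 ?eqxx.
case: eqP => [x0 | /eqP x_neq0].
  by case: eqP => [P0 | /eqP P_neq0]; rewrite /= x0 w_neq0 ?P0 ?P_neq0 eqxx.
by rewrite /= x_neq0 w_neq0; apply/eqP; field; rewrite x_neq0.
Qed.

Lemma is_ptype_of L v : is_ptype L v -> ptype_of v = L.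
Proof.
rewrite /ptype_of; case: L => [||||| l] /and3P[hx hw hu];
  rewrite ?(eqP hx) ?(negPf hx) ?(eqP hw) ?(negPf hw) ?(eqP hu) ?(negPf hu) ?eqxx //.
by congr PQuad; field; rewrite hx.
Qed.

Lemma is_ptype_neq0 L v : is_ptype L v -> v != 0.
Proof.
by rewrite vec_neq0; case: L => [||||| l] /and3P[hx hw hu]; rewrite ?hx ?hw ?hu ?orbT.
Qed.

Lemma is_ptypeE L v : (v != 0) && (ptype_of v == L) = is_ptype L v.
Proof.
apply/andP/idP => [[v_neq0 /eqP <-] | vL]; first exact: ptype_ofP.
by split; [exact: is_ptype_neq0 vL | apply/eqP/is_ptype_of].
Qed.

Lemma ptype_ofZ k v : k != 0 -> ptype_of (k *: v) = ptype_of v.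
Proof.
move=> k_neq0; rewrite /ptype_of XZ xuZ xwZ !qscale_eq0 mulf_eq0 (negPf k_neq0) /=.
rewrite qpolarZl qpolarZr !mulf_eq0 (negPf k_neq0) /=.
case: ifP => // _; case: ifP => // /negbT x_neq0.
by congr PQuad; field; rewrite x_neq0.
Qed.

Definition ptype_rep (L : ptype) : 'cV[F]_5 :=
  match L with
  | PtN => vec 1 0 0
  | Pell => vec 0 (1, 0) 0
  | Pplane => vec 1 (1, 0) 0
  | PHq => vec 0 0 (1, 0)
  | PSigma => vec 0 (1, 0) (0, 1)
  | PQuad l => vec 1 (- l, 0) (0, 1)
  end.

Lemma is_ptype_rep L : is_ptype L (ptype_rep L).
Proof.
case: L => [||||| l]; rewrite /= X0_vec xu_vec xw_vec /qpolar /=;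
  by rewrite -?[0 : F * F]/(0, 0) ?xpair_eqE ?mulr0 ?mul0r ?addr0 ?expr1n ?mulr1 ?oner_eq0 ?eqxx.
Qed.

Lemma ptype_of_rep L : ptype_of (ptype_rep L) = L.
Proof. exact/is_ptype_of/is_ptype_rep. Qed.

Lemma ptype_rep_neq0 L : ptype_rep L != 0.
Proof. exact/is_ptype_neq0/is_ptype_rep. Qed.

End PointTypes.

Arguments PtN {F}.
Arguments Pell {F}.
Arguments Pplane {F}.
Arguments PHq {F}.
Arguments PSigma {F}.

Section Points.
Variable F : finFieldType.
Implicit Types (k : F) (v : 'cV[F]_5) (p : {set 'cV[F]_5}) (L : ptype F).

Lemma mem_pt y v : reflect (exists2 k, k != 0 & y = k *: v) (y \in pt v).
Proof.
by apply: (iffP imsetP) => -[k]; rewrite ?inE => k_neq0 ->; exists k; rewrite ?inE.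
Qed.

Lemma pt_id v : v \in pt v.
Proof. by apply/mem_pt; exists 1; rewrite ?oner_eq0 ?scale1r. Qed.

Lemma pt_scale k v : k != 0 -> pt (k *: v) = pt v.
Proof.
move=> k_neq0; apply/setP=> y; apply/mem_pt/mem_pt => -[l l_neq0 ->].
  by exists (l * k); rewrite ?mulf_neq0 // scalerA.
by exists (l / k); rewrite ?mulf_neq0 ?invr_eq0 // scalerA divfK.
Qed.

Lemma act_pt M v : act M (pt v) = pt (M *m v).
Proof. by rewrite /act /pt -imset_comp; apply: eq_imset => k /=; rewrite scalemxAr. Qed.

Lemma PGP p : reflect (exists2 v, v != 0 & p = pt v) (p \in PG F).
Proof.
by apply: (iffP imsetP) => -[v]; rewrite ?inE => v_neq0 ->; exists v; rewrite ?inE.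
Qed.

Lemma pt_PG v : v != 0 -> pt v \in PG F.
Proof. by move=> v_neq0; apply/PGP; exists v. Qed.

Lemma PG_pt p y : p \in PG F -> y \in p -> p = pt y.
Proof. by case/PGP=> v _ -> /mem_pt[k k_neq0 ->]; rewrite pt_scale. Qed.

Lemma pset_PG P : pset P \subset PG F.
Proof. by apply/subsetP=> p; rewrite inE => /andP[]. Qed.

Lemma psetD_PG P (S : {set {set 'cV[F]_5}}) : pset P :\: S \subset PG F.
Proof. exact: subset_trans (subsetDl _ _) (pset_PG _). Qed.

Lemma eq_pointset (S S' : {set {set 'cV[F]_5}}) : S \subset PG F -> S' \subset PG F ->
  (forall v, v != 0 -> (pt v \in S) = (pt v \in S')) -> S = S'.
Proof.
move=> sSPG sS'PG SS'; apply/setP=> p; case: (boolP (p \in PG F)) => [/PGP[v v_neq0 ->]|].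
  exact: SS'.
by move=> pPG; rewrite (contraNF (subsetP sSPG p) pPG) (contraNF (subsetP sS'PG p) pPG).
Qed.

Lemma mem_pset_ptype P (s : seq (ptype F)) v :
    (forall y, y != 0 -> P y = (ptype_of y \in s)) -> v != 0 ->
  (pt v \in pset P) = (ptype_of v \in s).
Proof.
move=> Ps v_neq0; rewrite inE pt_PG //=; apply/forall_inP/idP => [Pv | sv y].
  by rewrite -Ps // Pv ?pt_id.
by case/mem_pt=> k k_neq0 ->; rewrite Ps ?ptype_ofZ // scaler_eq0 negb_or k_neq0.
Qed.

Definition points_of L := pset (fun v => ptype_of v == L).

Lemma mem_points_of L v : v != 0 -> (pt v \in points_of L) = (ptype_of v == L).
Proof.
by move=> v_neq0; rewrite -mem_seq1; apply: mem_pset_ptype => // y _; rewrite mem_seq1.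
Qed.

Lemma points_of_inj : injective points_of.
Proof.
move=> L L' LL'; apply/eqP; have rep_neq0 := ptype_rep_neq0 L.
by rewrite -[L in L == _]ptype_of_rep -mem_points_of // -LL' mem_points_of // ptype_of_rep.
Qed.

End Points.

Section Orbits.
Variables (F : finFieldType) (alpha : F).
Hypothesis pcharF2 : 2 \in [pchar F].
Hypothesis no_root : forall x : F, x ^+ 2 + x + alpha != 0.
Implicit Types (k : F) (v : 'cV[F]_5).

Lemma eq_ptype_of_scale v v' : v != 0 -> v' != 0 -> ptype_of v = ptype_of v' ->
  exists2 k, k != 0 &
    [/\ X v 0 = k * X v' 0, qpolar (xu v) (xw v) = k ^+ 2 * qpolar (xu v') (xw v'),
        (xw v == 0) = (xw v' == 0) & xw v = 0 -> (xu v == 0) = (xu v' == 0)].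
Proof.
move=> v_neq0 v'_neq0 vv'; have := ptype_ofP v'_neq0; rewrite -vv'.
case: (ptype_of v) (ptype_ofP v_neq0) => [||||| l] /and3P[hx hw hu] /and3P[hx' hw' hu'].
- exists (X v 0 / X v' 0); first by rewrite mulf_neq0 ?invr_eq0.
  by rewrite divfK // (eqP hw) (eqP hw') !qpolarr0 mulr0 (eqP hu) (eqP hu') !eqxx.
- exists 1; first exact: oner_neq0.
  rewrite (eqP hx) (eqP hx') (eqP hw) (eqP hw') !qpolarr0 !mulr0.
  by rewrite (negPf hu) (negPf hu') !eqxx.
- exists (X v 0 / X v' 0); first by rewrite mulf_neq0 ?invr_eq0.
  by rewrite divfK // (eqP hw) (eqP hw') !qpolarr0 mulr0 (negPf hu) (negPf hu') !eqxx.
- exists 1; first exact: oner_neq0.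
  rewrite (eqP hx) (eqP hx') (eqP hu) (eqP hu') !mulr0 (negPf hw) (negPf hw').
  by split=> // w0; rewrite w0 eqxx in hw.
- have [k k2] := sqrf_surj pcharF2 (qpolar (xu v) (xw v) / qpolar (xu v') (xw v')).
  exists k; first by rewrite -sqrf_eq0 k2 mulf_neq0 ?invr_eq0.
  rewrite (eqP hx) (eqP hx') mulr0 k2 divfK // (negPf hw) (negPf hw').
  by split=> // w0; rewrite w0 eqxx in hw.
- exists (X v 0 / X v' 0); first by rewrite mulf_neq0 ?invr_eq0.
  rewrite divfK // (eqP hu) (eqP hu') (negPf hw) (negPf hw'); split=> //.
    by field; rewrite hx'.
  by move=> w0; rewrite w0 eqxx in hw.
Qed.

Lemma GgrpP M : reflect
  (exists a b c d, [/\ a != 0, qnorm alpha (c, d) = 1 & M = Mabcd alpha a b c d])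
  (M \in Ggrp alpha).
Proof.
rewrite inE; apply: (iffP existsP) => [[a /existsP[b /existsP[c /existsP[d]]]] | ].
  by case/and3P=> a_neq0 /eqP g1 /eqP ->; exists a, b, c, d.
case=> a [b [c [d [a_neq0 g1 ->]]]]; exists a; apply/existsP; exists b.
apply/existsP; exists c; apply/existsP; exists d.
by rewrite a_neq0 -[_ == 1]/(qnorm alpha (c, d) == 1) g1 !eqxx.
Qed.

Lemma ptype_of_Mabcd a b c d v : a != 0 -> qnorm alpha (c, d) = 1 ->
  ptype_of (Mabcd alpha a b c d *m v) = ptype_of v.
Proof.
move=> a_neq0 g1; rewrite /ptype_of Mabcd_vecE X0_vec xu_vec xw_vec.
rewrite actW_eq0 // qpolar_act // g1 mul1r.
by case: eqP => // ->; rewrite actU_eq0.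
Qed.

Lemma Mabcd_eq0 a b c d v : a != 0 -> qnorm alpha (c, d) = 1 ->
  (Mabcd alpha a b c d *m v == 0) = (v == 0).
Proof.
move=> a_neq0 g1; rewrite Mabcd_vecE -[v in RHS]vecK !vec_eq0 actW_eq0 //.
by have [->|] := eqVneq (xw v) 0; rewrite ?actU_eq0 ?andbF.
Qed.

Lemma ptype_of_transitive v v' : v != 0 -> v' != 0 -> ptype_of v = ptype_of v' ->
  exists2 M, M \in Ggrp alpha & exists2 k, k != 0 & M *m v = k *: v'.
Proof.
move=> v_neq0 v'_neq0 /(eq_ptype_of_scale v_neq0 v'_neq0)[k k_neq0 [xk Pk ww uu]].
have [a [b [[c d] [a_neq0 g1 uE wE]]]] := act_transitive pcharF2 no_root k_neq0 Pk ww uu.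
exists (Mabcd alpha a b c d); first by apply/GgrpP; exists a, b, c, d.
by exists k => //; rewrite Mabcd_vecE uE wE xk -scale_vec vecK.
Qed.

Lemma orbitG_pt v : v != 0 -> orbitG alpha (pt v) = points_of (ptype_of v).
Proof.
move=> v_neq0; apply/setP=> p; apply/imsetP/idP => [[M] | pL].
  case/GgrpP=> a [b [c [d [a_neq0 g1 ->]]]] ->.
  by rewrite act_pt mem_points_of ?Mabcd_eq0 // ptype_of_Mabcd.
have /PGP[v' v'_neq0 pE] := subsetP (pset_PG _) _ pL.
move: pL; rewrite pE mem_points_of // => /eqP vv'.
have [M MG [k k_neq0 Mv]] := ptype_of_transitive v_neq0 v'_neq0 (esym vv').
by exists M => //; rewrite act_pt Mv pt_scale.
Qed.

Lemma orbitsG_points : orbitsG alpha = [set points_of L | L : ptype F].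
Proof.
apply/setP=> S; apply/imsetP/imsetP => [[p /PGP[v v_neq0 ->] ->] | [L _ ->]].
  by exists (ptype_of v); rewrite ?orbitG_pt.
have rep_neq0 := ptype_rep_neq0 L.
by exists (pt (ptype_rep L)); rewrite ?pt_PG // orbitG_pt // ptype_of_rep.
Qed.

End Orbits.

Section Geometry.
Variable F : finFieldType.
Implicit Types (l : F) (v : 'cV[F]_5).

Lemma ptype_of_X0 v : v != 0 -> (X v 0 == 0) = (ptype_of v \in [:: Pell; PHq; PSigma]).
Proof.
move=> v_neq0; case: (ptype_of v) (ptype_ofP v_neq0) => [||||| l] /and3P[hx _ _].
all: by rewrite ?hx ?(negPf hx).
Qed.

Lemma ptype_of_xw v : v != 0 -> (xw v == 0) = (ptype_of v \in [:: PtN; Pell; Pplane]).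
Proof.
move=> v_neq0; case: (ptype_of v) (ptype_ofP v_neq0) => [||||| l] /and3P[_ hw _].
all: by rewrite ?hw ?(negPf hw).
Qed.

Lemma ptype_of_qpolar v : v != 0 ->
  (qpolar (xu v) (xw v) == 0) = (ptype_of v \in [:: PtN; Pell; Pplane; PHq; PQuad 0]).
Proof.
move=> v_neq0; case: (ptype_of v) (ptype_ofP v_neq0) => [||||| l] /and3P[hx hw hu] /=;
  rewrite ?(eqP hw) ?qpolarr0 ?eqxx ?hu ?(negPf hu) //.
by rewrite (eqP hu) mulNr oppr_eq0 mulf_eq0 sqrf_eq0 (negPf hx) orbF !inE eqPQuad.
Qed.

Lemma ptype_of_Quad l v : l != 0 -> v != 0 ->
  (qpolar (xu v) (xw v) + l * X v 0 ^+ 2 == 0) = (ptype_of v \in [:: Pell; PHq; PQuad l]).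
Proof.
move=> l_neq0 v_neq0; case: (ptype_of v) (ptype_ofP v_neq0) => [||||| l'] /and3P[hx hw hu];
  rewrite ?(eqP hw) ?qpolarr0 ?(eqP hx) ?expr0n ?mulr0 ?addr0 ?add0r ?eqxx ?(negPf hu) //.
- by rewrite mulf_eq0 (negPf l_neq0) sqrf_eq0 (negPf hx).
- by rewrite mulf_eq0 (negPf l_neq0) sqrf_eq0 (negPf hx).
rewrite (eqP hu) mulNr addrC -mulrBl mulf_eq0 sqrf_eq0 (negPf hx) orbF subr_eq0.
by rewrite !inE eqPQuad eq_sym.
Qed.

Lemma Npt_vec : Npt F = pt (vec 1 0 0).
Proof. by congr pt; apply/matrixP=> i j; rewrite !mxE; case: i => [[|[|[|[|[|i]]]]] lti]. Qed.

Lemma mem_Npt v : v != 0 -> (pt v \in [set Npt F]) = (ptype_of v == PtN).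
Proof.
move=> v_neq0; rewrite in_set1 Npt_vec; apply/eqP/eqP => [ptv | vN].
  have /mem_pt[k k_neq0 ->] : v \in pt (vec 1 0 0) by rewrite -ptv pt_id.
  by rewrite ptype_ofZ //; apply: (ptype_of_rep PtN).
have := ptype_ofP v_neq0; rewrite vN => /and3P[x_neq0 /eqP w0 /eqP u0].
have -> : v = X v 0 *: vec 1 0 0 by rewrite scale_vec mulr1 !qscaler0 -[LHS]vecK w0 u0.
exact: pt_scale.
Qed.

Lemma mem_ell v : v != 0 -> (pt v \in ell F) = (ptype_of v == Pell).
Proof.
move=> v_neq0; rewrite -mem_seq1; apply: mem_pset_ptype v_neq0 => y y_neq0.
rewrite -[_ && _]/((X y 0 == 0) && (xw y == 0)) ptype_of_X0 // ptype_of_xw //.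
by case: (ptype_of y).
Qed.

Lemma mem_planePi v : v != 0 -> (pt v \in planePi F) = (ptype_of v \in [:: PtN; Pell; Pplane]).
Proof. by move=> v_neq0; apply: mem_pset_ptype v_neq0 => y; apply: ptype_of_xw. Qed.

Lemma mem_Sigma v : v != 0 -> (pt v \in Sigma F) = (ptype_of v \in [:: Pell; PHq; PSigma]).
Proof. by move=> v_neq0; apply: mem_pset_ptype v_neq0 => y; apply: ptype_of_X0. Qed.

Lemma mem_Hq v : v != 0 -> (pt v \in Hq F) = (ptype_of v \in [:: Pell; PHq]).
Proof.
move=> v_neq0; apply: mem_pset_ptype v_neq0 => y y_neq0.
rewrite -[_ && _]/((X y 0 == 0) && (qpolar (xu y) (xw y) == 0)) ptype_of_X0 // ptype_of_qpolar //.
by case: (ptype_of y).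
Qed.

Lemma mem_Cone v : v != 0 ->
  (pt v \in Cone F) = (ptype_of v \in [:: PtN; Pell; Pplane; PHq; PQuad 0]).
Proof. by move=> v_neq0; apply: mem_pset_ptype v_neq0 => y; apply: ptype_of_qpolar. Qed.

Lemma mem_Quad l v : l != 0 -> v != 0 ->
  (pt v \in Quad l) = (ptype_of v \in [:: Pell; PHq; PQuad l]).
Proof. by move=> l_neq0 v_neq0; apply: mem_pset_ptype v_neq0 => y; apply: ptype_of_Quad. Qed.

Lemma Npt_points : [set Npt F] = points_of PtN.
Proof.
apply: eq_pointset => [|| v v_neq0]; last by rewrite mem_Npt ?mem_points_of.
  by rewrite sub1set Npt_vec pt_PG // (ptype_rep_neq0 PtN).
exact: pset_PG.
Qed.

Lemma ell_points : ell F = points_of Pell.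
Proof.
apply: eq_pointset => [|| v v_neq0]; rewrite ?pset_PG //.
by rewrite mem_ell ?mem_points_of.
Qed.

Lemma planePi_points : planePi F :\: (ell F :|: [set Npt F]) = points_of Pplane.
Proof.
apply: eq_pointset => [|| v v_neq0]; rewrite ?psetD_PG ?pset_PG //.
by rewrite in_setD in_setU mem_planePi ?mem_ell ?mem_Npt ?mem_points_of //; case: (ptype_of v).
Qed.

Lemma Hq_points : Hq F :\: ell F = points_of PHq.
Proof.
apply: eq_pointset => [|| v v_neq0]; rewrite ?psetD_PG ?pset_PG //.
by rewrite in_setD mem_Hq ?mem_ell ?mem_points_of //; case: (ptype_of v).
Qed.

Lemma Sigma_points : Sigma F :\: Hq F = points_of PSigma.
Proof.
apply: eq_pointset => [|| v v_neq0]; rewrite ?psetD_PG ?pset_PG //.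
by rewrite in_setD mem_Sigma ?mem_Hq ?mem_points_of //; case: (ptype_of v).
Qed.

Lemma Cone_points : Cone F :\: (planePi F :|: Hq F) = points_of (PQuad 0).
Proof.
apply: eq_pointset => [|| v v_neq0]; rewrite ?psetD_PG ?pset_PG //.
rewrite in_setD in_setU mem_Cone ?mem_planePi ?mem_Hq ?mem_points_of //.
by case: (ptype_of v) => // l; rewrite !inE eqPQuad.
Qed.

Lemma Quad_points l : l != 0 -> Quad l :\: Hq F = points_of (PQuad l).
Proof.
move=> l_neq0; apply: eq_pointset => [|| v v_neq0]; rewrite ?psetD_PG ?pset_PG //.
rewrite in_setD mem_Quad ?mem_Hq ?mem_points_of //.
by case: (ptype_of v) => // l'; rewrite !inE eqPQuad.
Qed.

End Geometry.

Lemma card_dep (A B : finType) (P : pred A) (Q : A -> pred B) n :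
  (forall a, P a -> #|Q a| = n) -> #|[pred t : A * B | P t.1 && Q t.1 t.2]| = (#|P| * n)%N.
Proof.
move=> Qn; rewrite -[LHS]sum1_card big_mkcond /=.
rewrite -(pair_big xpredT xpredT (fun a b => (P a && Q a b : nat))) /=.
rewrite -sum_nat_const [RHS]big_mkcond /=; apply: eq_bigr => a _.
rewrite -[a \in P]/(P a); have [Pa | _] := boolP (P a); last by rewrite big1.
by rewrite -(Qn a Pa) -sum1_card [RHS]big_mkcond.
Qed.

Section Counting.
Variable F : finFieldType.
Local Notation q := #|F|.
Implicit Types (v : 'cV[F]_5) (w : F * F) (L : ptype F).

Lemma card_vec (P1 : pred F) (P2 : pred (F * F)) (P3 : F -> F * F -> pred (F * F)) n :
    (forall x w, P1 x -> P2 w -> #|P3 x w| = n) ->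
  #|[set v | [&& P1 (X v 0), P2 (xw v) & P3 (X v 0) (xw v) (xu v)]]| = (#|P1| * #|P2| * n)%N.
Proof.
move=> P3n; pose f (t : F * (F * F) * (F * F)) := vec t.1.1 t.2 t.1.2.
have f_bij : bijective f.
  exists (fun v => (X v 0, xw v, xu v)) => [[[x w] u] | v]; last exact: vecK.
  by rewrite /f /= X0_vec xw_vec xu_vec.
rewrite -(on_card_preimset (onW_bij _ f_bij)).
rewrite (eq_card (B := [pred t | (P1 t.1.1 && P2 t.1.2) && P3 t.1.1 t.1.2 t.2])); last first.
  by case=> [[x w] u]; rewrite !inE /f /= X0_vec xw_vec xu_vec andbA.
rewrite (card_dep (P := fun s => P1 s.1 && P2 s.2) (Q := fun s => P3 s.1 s.2) (n := n)).
  by rewrite (card_dep (Q := fun _ => P2) (n := #|P2|)).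
by move=> [x w] /andP[]; apply: P3n.
Qed.

Lemma card_scalar_neq0 : #|predC1 (0 : F)| = (q - 1)%N.
Proof. by rewrite cardC1 subn1. Qed.

Lemma card_pair_neq0 : #|predC1 (0 : F * F)| = (q * q - 1)%N.
Proof. by rewrite cardC1 card_prod subn1. Qed.

Lemma card_qpolar_eq w m : w != 0 -> #|[pred u | qpolar u w == m]| = q.
Proof.
case: w => w1 w2 w_neq0; rewrite -cardsT.
have [w20 | w2_neq0] := eqVneq w2 0.
  have w1_neq0 : w1 != 0 by apply: contraNneq w_neq0 => w10; rewrite w10 w20.
  have g_inj : injective (fun t : F => (t, m / w1)) by move=> t t' [].
  rewrite -(card_imset _ g_inj); apply: eq_card => -[u1 u2].
  rewrite !inE /qpolar /= w20 mulr0 add0r.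
  apply/eqP/imsetP => [E | [t _ [_ ->]]]; last by rewrite divfK.
  by exists u1; rewrite // -E mulfK.
have g_inj : injective (fun t : F => ((m - t * w1) / w2, t)) by move=> t t' [].
rewrite -(card_imset _ g_inj); apply: eq_card => -[u1 u2]; rewrite !inE /qpolar /=.
apply/eqP/imsetP => [E | [t _ [-> ->]]]; last by rewrite divfK // subrK.
by exists u2; rewrite // -E addrK mulfK.
Qed.

Lemma card_qpolar_neq0 w : w != 0 -> #|[pred u | qpolar u w != 0]| = (q * q - q)%N.
Proof.
move=> w_neq0; have := cardC [pred u : F * F | qpolar u w == 0].
rewrite card_qpolar_eq // card_prod => <-; rewrite addKn.
by apply: eq_card => u; rewrite !inE.
Qed.

Lemma card_pt v : v != 0 -> #|pt v| = (q - 1)%N.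
Proof.
move=> v_neq0; rewrite card_imset; last first.
  move=> k l /= /eqP; rewrite -subr_eq0 -scalerBl scaler_eq0 (negPf v_neq0) orbF subr_eq0.
  by move/eqP.
by rewrite -card_scalar_neq0; apply: eq_card => k; rewrite !inE.
Qed.

Lemma card_points_of_mul L :
  (#|points_of L| * (q - 1))%N = #|[set v | (v != 0) && (ptype_of v == L)]|.
Proof.
set D := [set v | _]; have PG_L := subsetP (pset_PG (fun v => ptype_of v == L)).
have partD : partition (points_of L) D.
  apply/and3P; split.
  - apply/eqP/setP=> y; apply/bigcupP/idP => [[p pL yp] | ].
      have /PGP[v v_neq0 pv] := PG_L _ pL; move: pL yp; rewrite pv mem_points_of //.
      move=> /eqP Lv /mem_pt[k k_neq0 ->].
      by rewrite inE scaler_eq0 negb_or k_neq0 v_neq0 ptype_ofZ // Lv eqxx.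
    by rewrite inE => /andP[y_neq0 Ly]; exists (pt y); rewrite ?pt_id ?mem_points_of.
  - apply/trivIsetP=> p p' pL p'L pp'; rewrite -setI_eq0; apply/set0Pn => -[y /setIP[yp yp']].
    by case/eqP: pp'; rewrite (PG_pt (PG_L _ pL) yp) (PG_pt (PG_L _ p'L) yp').
  - by apply/negP => /PG_L/PGP[v _ v0]; have := pt_id v; rewrite -v0 inE.
rewrite (card_partition partD) -sum_nat_const.
by apply: eq_bigr => p /PG_L/PGP[v v_neq0 ->]; rewrite card_pt.
Qed.

Definition ptype_card (L : ptype F) : nat :=
  match L with
  | PtN => 1
  | Pell => q + 1
  | Pplane => q ^ 2 - 1
  | PHq => q ^ 2 + q
  | PSigma | PQuad _ => q ^ 3 - q
  end%N.

Lemma card_ptype_vec L : #|[set v | (v != 0) && (ptype_of v == L)]| = ((q - 1) * ptype_card L)%N.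
Proof.
have -> : [set v | (v != 0) && (ptype_of v == L)] = [set v | is_ptype L v].
  by apply/setP=> v; rewrite !inE is_ptypeE.
have q_gt0 : (0 < q)%N by apply/card_gt0P; exists 0.
(* The cardinality lemmas below elaborate [#|F|] in syntactically different ways;
   [set] identifies them before [nia]. *)
case: L => [||||| l] /=.
- rewrite (card_vec (P1 := predC1 0) (P2 := pred1 0) (P3 := fun _ _ => pred1 0) (n := 1%N)).
    by rewrite card_scalar_neq0 card1; set n := #|F| in q_gt0 *; nia.
  by move=> *; apply: card1.
- rewrite (card_vec (P1 := pred1 0) (P2 := pred1 0) (P3 := fun _ _ => predC1 0)
                    (n := (q * q - 1)%N)).
    by rewrite !card1; set n := #|F| in q_gt0 *; nia.
  by move=> *; apply: card_pair_neq0.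
- rewrite (card_vec (P1 := predC1 0) (P2 := pred1 0) (P3 := fun _ _ => predC1 0)
                    (n := (q * q - 1)%N)).
    by rewrite card_scalar_neq0 card1; set n := #|F| in q_gt0 *; nia.
  by move=> *; apply: card_pair_neq0.
- rewrite (card_vec (P1 := pred1 0) (P2 := predC1 0) (P3 := fun _ w u => qpolar u w == 0) (n := q)).
    by rewrite card1 card_pair_neq0; set n := #|F| in q_gt0 *; nia.
  by move=> x w _ w_neq0; apply: card_qpolar_eq.
- rewrite (card_vec (P1 := pred1 0) (P2 := predC1 0) (P3 := fun _ w u => qpolar u w != 0)
                    (n := (q * q - q)%N)).
    by rewrite card1 card_pair_neq0; set n := #|F| in q_gt0 *; nia.
  by move=> x w _ w_neq0; apply: card_qpolar_neq0.
- rewrite (card_vec (P1 := predC1 0) (P2 := predC1 0)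
                    (P3 := fun x w u => qpolar u w == - l * x ^+ 2) (n := q)).
    by rewrite card_scalar_neq0 card_pair_neq0; set n := #|F| in q_gt0 *; nia.
  by move=> x w _ w_neq0; apply: card_qpolar_eq.
Qed.

Lemma card_points_of L : #|points_of L| = ptype_card L.
Proof.
have q1_gt0 : (0 < q - 1)%N.
  by rewrite -card_scalar_neq0; apply/card_gt0P; exists 1; rewrite !inE oner_neq0.
by apply/eqP; rewrite -(eqn_pmul2r q1_gt0) card_points_of_mul card_ptype_vec mulnC.
Qed.

End Counting.

Lemma imset_ptype (F : finFieldType) (T : finType) (f : ptype F -> T) :
  [set f L | L : ptype F] =
  [set f PtN; f Pell; f Pplane; f PHq; f PSigma; f (PQuad 0)]
    :|: [set f (PQuad l) | l in [set l : F | l != 0]].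
Proof.
apply/setP=> y; rewrite in_setU; apply/idP/idP => [/imsetP[L _ ->] | ].
  case: L => [||||| l]; rewrite ?inE ?eqxx ?orbT //.
  have [-> | l_neq0] := eqVneq l 0; first by rewrite eqxx orbT.
  by rewrite imset_f ?orbT // inE.
case/orP=> [| /imsetP[l _ ->]]; last exact: imset_f.
by rewrite !inE => /orP[/orP[/orP[/orP[/orP[|]|]|]|]|] /eqP ->; apply: imset_f.
Qed.

Lemma irreducible_no_root (F : fieldType) (alpha : F) :
  irreducible_poly ('X^2 + 'X + alpha%:P) -> forall x : F, x ^+ 2 + x + alpha != 0.
Proof.
move=> [size_gt1 irr] x; apply/negP => /eqP px0.
have : ('X - x%:P) %| 'X^2 + 'X + alpha%:P by rewrite dvdp_XsubCl /root !hornerE px0.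
move/(irr _ _)/eqp_size; rewrite size_XsubC => /(_ isT).
rewrite -addrA size_addl ?size_polyXn // (leq_ltn_trans (size_polyD _ _)) //.
by rewrite size_polyX size_polyC; case: (alpha != 0).
Qed.

Theorem lemma3p1 (h : nat) (F : finFieldType) (hF : #|F| = (2 ^ h)%N)
  (alpha : F) (hirr : irreducible_poly ('X^2 + 'X + alpha%:P)) :
  let q := (2 ^ h)%N in
  let O := orbitsG alpha in
  let A := [set @Npt F] in
  let B := @ell F in
  let C := @planePi F :\: (@ell F :|: [set @Npt F]) in
  let D := @Hq F :\: @ell F in
  let E := @Sigma F :\: @Hq F in
  let K := @Cone F :\: (@planePi F :|: @Hq F) in
  [/\ #|O| = (q + 5)%N,
      O = [set A; B; C; D; E; K] :|: [set Quad l :\: @Hq F | l in [set l : F | l != 0]],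
      [/\ #|A| = 1%N, #|B| = (q + 1)%N, #|C| = (q ^ 2 - 1)%N & #|D| = (q ^ 2 + q)%N],
      #|E| = (q ^ 3 - q)%N /\ #|K| = (q ^ 3 - q)%N
    & forall l : F, l != 0 -> #|Quad l :\: @Hq F| = (q ^ 3 - q)%N].
Proof.
cbv zeta; rewrite -hF.
have pcharF2 : 2 \in [pchar F] := card_finPcharP hF (isT : prime 2).
have QuadE : {in [set l : F | l != 0], forall l, Quad l :\: Hq F = points_of (PQuad l)}.
  by move=> l; rewrite inE; apply: Quad_points.
rewrite (orbitsG_points pcharF2 (irreducible_no_root hirr)) (eq_in_imset QuadE).
rewrite planePi_points Hq_points Sigma_points Cone_points ell_points Npt_points.
rewrite !card_points_of; split=> //.
- by rewrite card_imset; [rewrite card_ptype | apply: points_of_inj].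
- exact: imset_ptype.
- by move=> l l_neq0; rewrite Quad_points // card_points_of.
Qed.
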